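(* The bi-monotonic product is associative: for any three pairs of algebras $(\mathcal{A}_{k,\ell},\mathcal{A}_{k,r})$, $k=1,2,3$, with linear functionals $\varphi_k$ on $\mathcal{A}_{k,\ell}\sqcup\mathcal{A}_{k,r}$, one has \[(\varphi_1\rhd\!\!\rhd\varphi_2)\rhd\!\!\rhd\varphi_3=\varphi_1\rhd\!\!\rhd(\varphi_2\rhd\!\!\rhd\varphi_3)\] as linear functionals on $(\mathcal{A}_{1,\ell}\sqcup\mathcal{A}_{1,r})\sqcup(\mathcal{A}_{2,\ell}\sqcup\mathcal{A}_{2,r})\sqcup(\mathcal{A}_{3,\ell}\sqcup\mathcal{A}_{3,r})$ (under the natural identifications). Here a product $\varphi_i\rhd\!\!\rhd\varphi_j$ is regarded as a functional on the pair of algebras $(\mathcal{A}_{i,\ell}\sqcup\mathcal{A}_{j,\ell},\ \mathcal{A}_{i,r}\sqcup\mathcal{A}_{j,r})$, using $(\mathcal{A}_{i,\ell}\sqcup\mathcal{A}_{i,r})\sqcup(\mathcal{A}_{j,\ell}\sqcup\mathcal{A}_{j,r})\cong(\mathcal{A}_{i,\ell}\sqcup\mathcal{A}_{j,\ell})\sqcup(\mathcal{A}_{i,r}\sqcup\mathcal{A}_{j,r})$.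
   Context: For algebras $\mathcal{C}_k$, $\sqcup_k\mathcal{C}_k$ denotes the free product without identification of units, $*_k\mathcal{C}_k$ denotes the free product of unital algebras with identification of units, and $\widetilde{\mathcal{C}}=\mathbb{C}1\oplus\mathcal{C}$ denotes the unitization; one has $\widetilde{\mathcal{C}_1}*\widetilde{\mathcal{C}_2}\cong\widetilde{\mathcal{C}_1\sqcup\mathcal{C}_2}$. Notation. For $n\ge1$ and $\chi:\{1,\dots,n\}\to\{\ell,r\}$ with $\chi^{-1}(\{\ell\})=\{i_1<\dots<i_p\}$ and $\chi^{-1}(\{r\})=\{i_{p+1}>\dots>i_n\}$, let $\prec_\chi$ be the total order $i_1\prec_\chi i_2\prec_\chi\cdots\prec_\chi i_n$ on $\{1,\dots,n\}$. A $\chi$-interval is a subset of $\{1,\dots,n\}$ which is an interval for $\prec_\chi$. For $V=\{v_1<\dots<v_s\}\subseteq\{1,\dots,n\}$ write $a_V=a_{v_1}\cdots a_{v_s}$; a functional applied to the empty product equals $1$. For $\omega:\{1,\dots,n\}\to K$, $\pi_{\chi,\omega}$ is the unique partition of $\{1,\dots,n\}$ into blocks $V_1,\dots,V_m$ such that each $V_k$ is a $\chi$-interval, $\max_{\prec_\chi}V_k\prec_\chi\min_{\prec_\chi}V_{k+1}$, $\omega$ is constant on each $V_k$, and $\omega(V_k)\ne\omega(V_{k+1})$ for $1\le k\le m-1$. c-bi-free product. Given pairs of unital algebras $(\mathcal{B}_{k,\ell},\mathcal{B}_{k,r})_{k\in K}$ and unital linear functionals $\varphi_k,\psi_k$ on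 $\mathcal{B}_{k,\ell}*\mathcal{B}_{k,r}$, their c-bi-free product $(\varphi,\psi)$ is the unique pair of unital linear functionals on $*_k(\mathcal{B}_{k,\ell}*\mathcal{B}_{k,r})$ restricting to $\varphi_k,\psi_k$ on each $\mathcal{B}_{k,\ell}*\mathcal{B}_{k,r}$ and such that whenever $n\ge1$, $\chi:\{1,\dots,n\}\to\{\ell,r\}$, $\omega:\{1,\dots,n\}\to K$, $b_j\in\mathcal{B}_{\omega(j),\chi(j)}$ and $\psi(b_V)=0$ for all $V\in\pi_{\chi,\omega}$, then $\psi(b_1\cdots b_n)=0$ and $\varphi(b_1\cdots b_n)=\prod_{V\in\pi_{\chi,\omega}}\varphi(b_V)$. Bi-monotonic product. Let $(\mathcal{A}_{k,\ell},\mathcal{A}_{k,r})$, $k=1,2$, be pairs of algebras with linear functionals $\varphi_k$ on $\mathcal{A}_{k,\ell}\sqcup\mathcal{A}_{k,r}$. Let $\widetilde{\varphi_k}$ be the unital extension of $\varphi_k$ to $\widetilde{\mathcal{A}_{k,\ell}}*\widetilde{\mathcal{A}_{k,r}}\cong\widetilde{\mathcal{A}_{k,\ell}\sqcup\mathcal{A}_{k,r}}$, and $\delta_1$ the unital functional on $\widetilde{\mathcal{A}_{1,\ell}\sqcup\mathcal{A}_{1,r}}$ vanishing on $\mathcal{A}_{1,\ell}\sqcup\mathcal{A}_{1,r}$. Let $(\widetilde\varphi,\widetilde\psi)$ be the c-bi-free product of $(\widetilde{\varphi_1},\delta_1)$ and $(\widetilde{\varphi_2},\widetilde{\varphi_2})$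 for the pairs $(\widetilde{\mathcal{A}_{k,\ell}},\widetilde{\mathcal{A}_{k,r}})$, $k=1,2$. The bi-monotonic product $\varphi_1\rhd\!\!\rhd\varphi_2$ is the restriction of $\widetilde\varphi$ to $(\mathcal{A}_{1,\ell}\sqcup\mathcal{A}_{1,r})\sqcup(\mathcal{A}_{2,\ell}\sqcup\mathcal{A}_{2,r})$. *)

From HB Require Import structures.
From mathcomp Require Import all_boot all_order all_algebra.
Set Implicit Arguments. Unset Strict Implicit. Unset Printing Implicit Defensive.
Import Order.TTheory GRing.Theory Num.Theory.
Local Open Scope ring_scope.

Inductive side := Lft | Rgt.
Definition side_eqb (x y : side) : bool :=
  match x, y with Lft, Lft | Rgt, Rgt => true | _, _ => false end.
Definition is_left (x : side) : bool := if x is Lft then true else false.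

Record nualg (R : fieldType) := NUAlg {
  nua_car :> lmodType R;
  nua_mul : nua_car -> nua_car -> nua_car;
  nua_mulA : forall a b c, nua_mul a (nua_mul b c) = nua_mul (nua_mul a b) c;
  nua_linl : forall (k : R) a b c,
      nua_mul (k *: a + b) c = k *: nua_mul a c + nua_mul b c;
  nua_linr : forall (k : R) a b c,
      nua_mul c (k *: a + b) = k *: nua_mul c a + nua_mul c b }.

(* A family of base algebras A i (i : I, the "colours") is fixed.  The free  *)
(* product (without identification of units) of any subfamily {A i | i in S}*)
(* is the free (non-unital) algebra on the letters (i, a), a in A i, modulo  *)
(* a (i,a)(i,b) = (i, ab) and linearity in each letter; its unitization is   *)
(* obtained by adding the empty word (= the unit).  Hence a linear           *)
(* functional on it is the same thing as a function on words which is       *)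
(* multilinear in each letter and compatible with merging adjacent letters   *)
(* of the same colour.  Elements of the (unitized) free product are          *)
(* represented by formal linear combinations of words; all functionals below *)
(* are evaluated by linear extension, which is well defined on the quotient. *)
Section Words.
Variables (R : fieldType) (I : Type) (A : I -> nualg R).

Definition letter := {i : I & nua_car (A i)}.
Definition word := seq letter.
Definition mkl (i : I) (a : A i) : letter := Tagged (fun j => nua_car (A j)) a.

Definition on_colors (S : pred I) (w : word) : bool :=
  all (fun l : letter => S (tag l)) w.

Definition multilinear_on (S : pred I) (f : word -> R) : Prop :=
  forall (u v : word) (i : I), S i -> on_colors S u -> on_colors S v ->
  forall (k : R) (a b : A i),
    f (u ++ mkl (k *: a + b) :: v) = k * f (u ++ mkl a :: v) + f (u ++ mkl b :: v).

Definition merge_on (S : pred I) (f : word -> R) : Prop :=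
  forall (u v : word) (i : I), S i -> on_colors S u -> on_colors S v ->
  forall (a b : A i),
    f (u ++ mkl a :: mkl b :: v) = f (u ++ mkl (nua_mul a b) :: v).

Definition lin_functional_on (S : pred I) (f : word -> R) : Prop :=
  multilinear_on S f /\ merge_on S f.

Definition unital_functional_on (S : pred I) (f : word -> R) : Prop :=
  lin_functional_on S f /\ f [::] = 1.

Definition felem := seq (R * word).
Definition ev (f : word -> R) (x : felem) : R := \sum_(t <- x) t.1 * f t.2.
Definition fmul (x y : felem) : felem :=
  [seq (s.1 * t.1, s.2 ++ t.2) | s <- x, t <- y].
Definition fone : felem := [:: (1, [::])].
Definition prodf (xs : seq felem) : felem := foldr fmul fone xs.
Definition felem_on (S : pred I) (x : felem) : bool :=
  all (fun t => on_colors S t.2) x.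

Definition chi_order (chi : nat -> side) (n : nat) : seq nat :=
  [seq i <- iota 0 n | is_left (chi i)] ++
  rev [seq i <- iota 0 n | ~~ is_left (chi i)].

Fixpoint runs (K : eqType) (f : nat -> K) (s : seq nat) : seq (seq nat) :=
  match s with
  | [::] => [::]
  | x :: s' =>
      match runs f s' with
      | V :: rest => if f (head x V) == f x then (x :: V) :: rest
                     else [:: x] :: V :: rest
      | [::] => [:: [:: x]]
      end
  end.

Definition pi_chi_omega (K : eqType) (chi : nat -> side) (omega : nat -> K)
  (n : nat) : seq (seq nat) := runs omega (chi_order chi n).

Definition bprod (b : nat -> felem) (n : nat) (V : seq nat) : felem :=
  prodf [seq b i | i <- iota 0 n & i \in V].

(* c-bi-free product (phi, psi) of the pairs of unital functionals
   (phik k, psik k) on B_{k,l} * B_{k,r}, where B_{k,chi} is the unitization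
   of the free product of the A i with S k chi i. *)
Definition cbifree (K : finType) (S : K -> side -> pred I)
    (phik psik : K -> word -> R) (phi psi : word -> R) : Prop :=
  let D := [pred i | [exists k, S k Lft i || S k Rgt i]] in
  [/\ unital_functional_on D phi, unital_functional_on D psi,
      (forall (k : K) (w : word), on_colors (predU (S k Lft) (S k Rgt)) w ->
           phi w = phik k w /\ psi w = psik k w) &
      (forall (n : nat) (chi : nat -> side) (omega : nat -> K) (b : nat -> felem),
         (0 < n)%N ->
         (forall j, (j < n)%N -> felem_on (S (omega j) (chi j)) (b j)) ->
         (forall V, V \in pi_chi_omega chi omega n -> ev psi (bprod b n V) = 0) ->
         ev psi (bprod b n (iota 0 n)) = 0 /\
         ev phi (bprod b n (iota 0 n)) =
           \prod_(V <- pi_chi_omega chi omega n) ev phi (bprod b n V))].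

Definition uext (f : word -> R) : word -> R :=
  fun w => if w is [::] then 1 else f w.
Definition delta_fun : word -> R := fun w => if w is [::] then 1 else 0.

(* Bi-monotonic product: t1 is a functional on the free product of the
   A i, i in D1 (pair (A_{1,l}, A_{1,r}) where sd gives the face), t2 the same
   for D2; t is t1 |>> t2 on the free product of the A i, i in D1 or D2.
   (Relational form of the definition via the c-bi-free product.) *)
Definition bimon_rel (sd : I -> side) (D1 D2 : pred I) (t1 t2 t : word -> R) : Prop :=
  exists phi psi : word -> R,
    @cbifree bool
      (fun (k : bool) (c : side) =>
         [pred i | (if k then D1 i else D2 i) && side_eqb (sd i) c])
      (fun k => if k then uext t1 else uext t2)
      (fun k => if k then delta_fun else uext t2) phi psi /\
    (forall w : word, w <> [::] -> on_colors (predU D1 D2) w -> t w = phi w).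

End Words.

Definition pairc (k : nat) : pred ('I_3 * side) :=
  [pred c | nat_of_ord c.1 == k].

(* The bi-monotonic product has an explicit formula: on a word w, t1 |>> t2
   is t1 on the subword of letters of the first pair, times the product of t2
   over the maximal chi-intervals of the remaining letters, each read in its
   original order.  This is proved by induction on the length of w: replacing
   each letter a_j by a_j + c_j 1, with coefficients chosen so that t2 vanishes
   on every such chi-interval, the c-bi-free rule makes the whole product
   vanish under the first functional, and the formula expands to zero in the
   same way, so both agree on w once they agree on all shorter words.
   Associativity is then an identity between the two iterated formulas:
   cutting the chi-order at the letters of the first pair and then at those of
   the second yields the same segments as cutting at both at once. *)

From Pilot Require Import Defs.
From HB Require Import structures.
From mathcomp Require Import all_boot all_order all_algebra.
Set Implicit Arguments. Unset Strict Implicit. Unset Printing Implicit Defensive.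
Import GRing.Theory.

Section Segments.
Variable T : eqType.
Implicit Types (p q P : pred T) (s c : seq T).

Definition chi_seq P s : seq T := [seq i <- s | P i] ++ rev [seq i <- s | ~~ P i].

Lemma chi_seq_filter P q s : chi_seq P [seq x <- s | q x] = [seq x <- chi_seq P s | q x].
Proof.
rewrite /chi_seq filter_cat filter_rev; congr (_ ++ rev _); rewrite -!filter_predI;
by apply: eq_filter => x /=; rewrite andbC.
Qed.

Lemma perm_chi_seq P s : perm_eq (chi_seq P s) s.
Proof. by apply: perm_trans (permEl (perm_filterC P s)); rewrite perm_cat2l perm_rev. Qed.

(* The maximal segments of s between (and excluding) the elements satisfying
   p; empty segments are kept. *)
Fixpoint cut_by p s : seq (seq T) :=
  if s is x :: s' then
    let r := cut_by p s' in
    if p x then [::] :: r else (x :: head [::] r) :: behead r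
  else [:: [::]].

Lemma cut_byE p s : cut_by p s = head [::] (cut_by p s) :: behead (cut_by p s).
Proof. by case: s => //= x s; case: (p x). Qed.

Lemma flatten_cut_by p s : flatten (cut_by p s) = [seq x <- s | ~~ p x].
Proof.
elim: s => //= x s IH; case: (p x) => /=; first by rewrite IH.
by rewrite -IH [in RHS](cut_byE p s).
Qed.

Lemma mem_cut_by p s g x : g \in cut_by p s -> x \in g -> (x \in s) && ~~ p x.
Proof.
move=> gS xg; have : x \in flatten (cut_by p s) by apply/flattenP; exists g.
by rewrite flatten_cut_by mem_filter andbC.
Qed.

Lemma cut_by_filter p q s : {in s, forall x, p x -> q x} ->
  cut_by p [seq x <- s | q x] = map (filter q) (cut_by p s).
Proof.
elim: s => //= x s IH pq.
have {}IH : cut_by p [seq x <- s | q x] = map (filter q) (cut_by p s).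
  by apply: IH => y ys; apply: pq; rewrite inE ys orbT.
case qx: (q x); case px: (p x) => /=; rewrite ?px ?IH ?qx //.
- by rewrite (cut_byE p s).
- by move: (pq x (mem_head _ _) px); rewrite qx.
- by rewrite (cut_byE p s).
Qed.

Lemma cut_by_cut_by p1 p2 c :
  flatten (map (cut_by p2) (cut_by p1 c)) = cut_by (predU p1 p2) c.
Proof.
elim: c => //= x c IH; case p1x: (p1 x) => /=; first by rewrite IH.
rewrite -IH (cut_byE p1 c) /=; case p2x: (p2 x) => //=.
by rewrite (cut_byE p2 (head [::] _)).
Qed.

Lemma filter_mem_cut_by p c g : uniq c -> g \in cut_by p c -> [seq y <- c | y \in g] = g.
Proof.
elim: c g => [|x c IH] g /=; first by move=> _; rewrite inE => /eqP->.
move=> /andP[xc uc].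
have xg g' : g' \in cut_by p c -> x \notin g'.
  by move=> g'S; apply/negP => /(mem_cut_by g'S)/andP[xc' _]; rewrite xc' in xc.
case px: (p x).
  rewrite inE => /orP[/eqP->|gS]; first by rewrite /= filter_pred0.
  by rewrite (negbTE (xg _ gS)) IH.
rewrite inE => /orP[/eqP->|gS]; last first.
  have gS' : g \in cut_by p c by rewrite (cut_byE p c) inE gS orbT.
  by rewrite (negbTE (xg _ gS')) IH.
rewrite inE eqxx /=; congr (_ :: _).
have hS : head [::] (cut_by p c) \in cut_by p c by rewrite [in X in _ \in X]cut_byE mem_head.
rewrite -[RHS](IH _ uc hS); apply: eq_in_filter => y yc.
by rewrite inE; case: eqP => // yx; rewrite -yx yc in xc.
Qed.

End Segments.

Lemma chi_seq_map (T U : eqType) (f : U -> T) (P : pred T) (s : seq U) :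
  chi_seq P (map f s) = map f (chi_seq (P \o f) s).
Proof. by rewrite /chi_seq map_cat map_rev !filter_map. Qed.

Lemma cut_by_map (T U : eqType) (f : U -> T) (p : pred T) (s : seq U) :
  cut_by p (map f s) = map (map f) (cut_by (p \o f) s).
Proof.
elim: s => //= x s IH; rewrite IH; case: (p (f x)) => //=.
by case: (cut_by _ s).
Qed.

Section Runs.
Variables (K : eqType) (f : nat -> K).

Lemma flatten_runs s : flatten (runs f s) = s.
Proof.
elim: s => //= x s IH; case E: (runs f s) => [|V rest]; first by rewrite E in IH; rewrite -IH.
by case: ifP => _ /=; rewrite -IH E.
Qed.

Lemma runs_constant s V :
  V \in runs f s -> (V != [::]) && all (fun y => f y == f (head 0%N V)) V.
Proof.
elim: s V => //= x s IH V; case E: (runs f s) => [|V' rest].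
  by rewrite inE => /eqP-> /=; rewrite eqxx.
have /andP[nV' aV'] : (V' != [::]) && all (fun y => f y == f (head 0%N V')) V'.
  by apply: IH; rewrite E mem_head.
case: ifP => Hf; rewrite inE => /orP[/eqP->|Vr].
- rewrite /= eqxx /=; apply/allP => y yV; move/allP: aV' => /(_ y yV)/eqP->.
  by case: V' nV' Hf {yV E} => //= z V' _ /eqP.
- by apply: IH; rewrite E inE Vr orbT.
- by rewrite /= eqxx.
- by apply: IH; rewrite E.
Qed.

Lemma runs_cons x s : exists V rest, runs f (x :: s) = (x :: V) :: rest.
Proof.
rewrite /=; case: (runs f s) => [|V rest]; first by exists [::], [::].
by case: ifP => _; [exists V, rest | exists [::], (V :: rest)].
Qed.

End Runs.

Lemma runs_cut_by (p : pred nat) s :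
  [seq V <- runs p s | ~~ p (head 0%N V)] = [seq g <- cut_by p s | g != [::]].
Proof.
elim: s => //= x s IH.
case: s IH => [|y s] IH; first by rewrite /=; case: (p x).
have [V1 [R1 E1]] := runs_cons p y s.
rewrite E1 /= in IH *.
case px: (p x); case py: (p y) => /=; rewrite ?px ?py ?eqxx /=; rewrite py /= in IH.
- by rewrite -IH.
- by rewrite -IH.
- by rewrite IH.
- by move: IH; rewrite (cut_byE p s) /= => -[-> ->].
Qed.

Section Expansion.
Variable R : comPzRingType.
Local Open Scope ring_scope.
Implicit Types (f : seq nat -> R) (c : nat -> R) (s t : seq nat).

(* The value of f at the formal product of the (x_j + c j), j in s:
   expand f c s = \sum_(t subsequence of s) (\prod_(j in s, j \notin t) c j) * f t. *)
Fixpoint expand f c s : R :=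
  if s is j :: s' then expand (fun t => f (j :: t)) c s' + c j * expand f c s'
  else f [::].

Lemma eq_in_expand_coef f c1 c2 s : {in s, c1 =1 c2} -> expand f c1 s = expand f c2 s.
Proof.
elim: s f => //= j s IH f c12; rewrite c12 ?mem_head // !IH // => k ks;
by apply: c12; rewrite inE ks orbT.
Qed.

Lemma expand_coef0 f c s : {in s, c =1 fun=> 0} -> expand f c s = f s.
Proof.
elim: s f => //= j s IH f c0; rewrite c0 ?mem_head // mul0r addr0 IH // => k ks;
by apply: c0; rewrite inE ks orbT.
Qed.

(* Terms missing a position of Q carry a factor c j = 0 with Q j. *)
Lemma eq_expand_covering (Q : pred nat) f (g : seq nat -> R) c s :
  (forall t, subseq t s -> {in s, forall x, Q x -> x \in t} -> f t = g t) ->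
  {in s, forall j, Q j -> c j = 0} -> expand f c s = expand g c s.
Proof.
elim: s f g => [|j s IH] f g fg cQ /=; first by apply: fg.
have cQs : {in s, forall k, Q k -> c k = 0}.
  by move=> k ks; apply: cQ; rewrite inE ks orbT.
congr (_ + _).
  apply: IH => // t ts tQ; apply: fg; first by rewrite /= eqxx.
  move=> x; rewrite inE => /orP[/eqP->|xs] Qx; rewrite inE ?eqxx //.
  by rewrite tQ ?orbT.
case Qj: (Q j); first by rewrite (cQ j) ?mem_head ?mul0r.
congr (_ * _); apply: IH => // t ts tQ; apply: fg.
  by apply: (subseq_trans ts); apply: subseq_cons.
move=> x; rewrite inE => /orP[/eqP->|]; [by rewrite Qj | exact: tQ].
Qed.

Lemma eq_expand f (g : seq nat -> R) c s : (forall t, subseq t s -> f t = g t) -> expand f c s = expand g c s.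
Proof. by move=> fg; apply: (@eq_expand_covering pred0) => // t ts _; apply: fg. Qed.

(* The top term of an expansion is f s itself, with coefficient 1. *)
Lemma expand_subr_top f (g : seq nat -> R) c s :
  (forall t, subseq t s -> (size t < size s)%N -> f t = g t) ->
  expand f c s - f s = expand g c s - g s.
Proof.
elim: s f g => [|j s IH] f g fg /=; first by rewrite !subrr.
have -> : expand f c s = expand g c s.
  apply: eq_expand => t ts; apply: fg; first exact: (subseq_trans ts (subseq_cons s j)).
  by rewrite ltnS size_subseq.
have E : expand (fun t => f (j :: t)) c s - f (j :: s) =
         expand (fun t => g (j :: t)) c s - g (j :: s).
  by apply: IH => t ts st; apply: fg; rewrite /= ?eqxx ?ltnS.
by rewrite addrAC E addrAC.
Qed.

Lemma expand_split (P : pred nat) f1 f2 c s :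
  expand (fun t => f1 [seq x <- t | P x] * f2 [seq x <- t | ~~ P x]) c s =
  expand f1 c [seq x <- s | P x] * expand f2 c [seq x <- s | ~~ P x].
Proof.
elim: s f1 f2 => [|j s IH] f1 f2 //=.
case Pj: (P j) => /=.
  by rewrite (IH (fun t => f1 (j :: t)) f2) IH mulrDl mulrA.
by rewrite (IH f1 (fun t => f2 (j :: t))) IH mulrDr mulrCA.
Qed.

Lemma expand_prod (G : seq (seq nat)) (h : seq nat -> seq nat -> R) c s :
  uniq (flatten G) -> {subset s <= flatten G} ->
  expand (fun t => \prod_(g <- G) h g [seq x <- t | x \in g]) c s =
  \prod_(g <- G) expand (h g) c [seq x <- s | x \in g].
Proof.
elim: G s => [|g G IH] s /= uG sG.
  by case: s sG => [|j s] sG; [rewrite /= !big_nil | have := sG j (mem_head _ _)].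
rewrite cat_uniq in uG; case/and3P: uG => _ gG uG.
have disj g' x : g' \in G -> x \in g' -> (x \in g) = false.
  move=> g'G xg'; apply/negbTE/negP => xg; move/hasPn: gG => /(_ x).
  by rewrite xg => /(_ (introT flattenP (ex_intro2 _ _ g' g'G xg'))).
have filter_out t g' : g' \in G ->
    [seq x <- [seq x <- t | x \notin g] | x \in g'] = [seq x <- t | x \in g'].
  move=> g'G; rewrite -filter_predI; apply: eq_filter => x /=.
  by case xg': (x \in g') => //=; rewrite (disj g' x).
pose F t := \prod_(g' <- G) h g' [seq x <- t | x \in g'].
transitivity (expand (h g) c [seq x <- s | x \in g] * expand F c [seq x <- s | x \notin g]).
  rewrite -(expand_split (mem g)); apply: eq_expand => t _; rewrite big_cons.
  by congr (_ * _); apply: eq_big_seq => g' g'G; rewrite filter_out.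
rewrite [RHS]big_cons IH ?filter_uniq //.
  by congr (_ * _); apply: eq_big_seq => g' g'G; rewrite filter_out.
move=> x; rewrite mem_filter => /andP[xg /sG]; rewrite mem_cat.
by rewrite (negbTE xg).
Qed.

(* Coefficients making the expansion of f equal to 1 on s, built from the
   back of s: each new head coefficient corrects the total. *)
Fixpoint unit_coef f s : nat -> R :=
  if s is j :: s' then
    fun k => if k == j then 1 - expand (fun t => f (j :: t)) (unit_coef f s') s'
             else unit_coef f s' k
  else fun=> 0.

Lemma unit_coef_behead f j s : j \notin s -> {in s, unit_coef f (j :: s) =1 unit_coef f s}.
Proof. by move=> js k ks /=; case: eqP ks => // ->; rewrite (negbTE js). Qed.

Lemma expand_unit_coef f s : f [::] = 1 -> uniq s -> expand f (unit_coef f s) s = 1.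
Proof.
move=> f1; elim: s => //= j s IH /andP[js us].
rewrite !(eq_in_expand_coef _ (unit_coef_behead f js)) IH // eqxx.
by rewrite mulr1 addrC subrK.
Qed.

Definition center_coef f s k : R :=
  if s is j :: _ then unit_coef f s k - (k == j)%:R else 0.

Lemma expand_center_coef f s :
  f [::] = 1 -> uniq s -> s != [::] -> expand f (center_coef f s) s = 0.
Proof.
case: s => // j s f1 /andP[js us] _.
have cs : {in s, center_coef f (j :: s) =1 unit_coef f s}.
  move=> k ks; rewrite /center_coef unit_coef_behead //.
  by case: eqP ks => [->|_ _]; rewrite ?(negbTE js) ?subr0.
rewrite /= !(eq_in_expand_coef _ cs) expand_unit_coef // eqxx.
by rewrite addrAC subrr add0r mulr1 subrr.
Qed.

Definition centering_coefs f (base : seq nat) (G : seq (seq nat)) : nat -> R :=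
  foldr (fun g c k => if k \in g then center_coef f [seq j <- base | j \in g] k else c k)
        (fun=> 0) G.

Lemma centering_coefs_out f base G j :
  j \notin flatten G -> centering_coefs f base G j = 0.
Proof.
elim: G => //= g G IH; rewrite mem_cat negb_or => /andP[jg /IH].
by rewrite (negbTE jg).
Qed.

Lemma centering_coefs_in f base G g j : uniq (flatten G) -> g \in G -> j \in g ->
  centering_coefs f base G j = center_coef f [seq k <- base | k \in g] j.
Proof.
elim: G => //= g' G IH; rewrite cat_uniq => /and3P[_ dis uG].
rewrite inE => /orP[/eqP<- /= ->//|gG] jg.
have jG : j \in flatten G by apply/flattenP; exists g.
have -> : (j \in g') = false by apply: contraNF dis => jg'; apply/hasP; exists j.
exact: IH.
Qed.

Lemma expand_centering_coefs f base G g : f [::] = 1 -> uniq base -> uniq (flatten G) ->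
  g \in G -> [seq j <- base | j \in g] != [::] ->
  expand f (centering_coefs f base G) [seq j <- base | j \in g] = 0.
Proof.
move=> f1 ub uG gG gn; rewrite (eq_in_expand_coef _ (c2 := center_coef f [seq j <- base | j \in g])).
  by rewrite expand_center_coef ?filter_uniq.
by move=> k; rewrite mem_filter => /andP[kg _]; apply: centering_coefs_in.
Qed.

End Expansion.

Section Positions.
Variables (R : fieldType) (I : Type) (A : I -> nualg R).
Local Open Scope ring_scope.
Implicit Types (L : nat -> letter A) (s : seq nat).

Definition colored (D : pred I) L : pred nat := fun j => D (tag (L j)).
Definition left_pos (sd : I -> side) L : pred nat := fun j => Defs.is_left (sd (tag (L j))).

Definition shift_letter L (c : nat -> R) (j : nat) : felem A :=
  [:: (1, [:: L j]); (c j, [::])].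

Lemma ev_fmul (f : word A -> R) (x y : felem A) :
  ev f (fmul x y) = \sum_(a <- x) a.1 * ev (fun u => f (a.2 ++ u)) y.
Proof.
rewrite /ev /fmul; elim: x => [|a x IH] /=; first by rewrite !big_nil.
rewrite big_cat big_cons IH big_map mulr_sumr; congr (_ + _).
by apply: eq_bigr => t _ /=; rewrite mulrA.
Qed.

Lemma ev_prod_shift (f : word A -> R) L c s :
  ev f (prodf (map (shift_letter L c) s)) = expand (fun t => f (map L t)) c s.
Proof.
elim: s f => [|j s IH] f; first by rewrite /= /ev /fone big_cons big_nil mul1r addr0.
by rewrite [prodf _]/= ev_fmul !big_cons big_nil /= !IH mul1r addr0.
Qed.

Variables (sd : I -> side) (D1 : pred I) (t1 t2 : word A -> R).

Definition bimon_eval L s : R :=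
  uext t1 [seq L j | j <- s & colored D1 L j] *
  \prod_(g <- cut_by (colored D1 L) (chi_seq (left_pos sd L) s))
     uext t2 [seq L j | j <- s & j \in g].

Lemma bimon_eval_map L (f : nat -> nat) s : {in s &, injective f} ->
  bimon_eval L (map f s) = bimon_eval (L \o f) s.
Proof.
move=> inj; rewrite /bimon_eval filter_map -map_comp chi_seq_map cut_by_map big_map.
congr (_ * _); apply: eq_big_seq => g gS; congr (uext t2 _).
rewrite filter_map -map_comp; congr map; apply: eq_in_filter => x xs /=.
have gs : {subset g <= s}.
  move=> y yg; have /andP[yc _] := mem_cut_by gS yg.
  by move: yc; rewrite (perm_mem (perm_chi_seq _ _)).
apply/mapP/idP => [[y yg e]|xg]; last by exists x.
by rewrite (inj x y xs (gs y yg) e).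
Qed.

End Positions.

Section BimonFormula.
Variables (R : fieldType) (I : Type) (A : I -> nualg R).
Variables (sd : I -> side) (D1 D2 : pred I) (t1 t2 phi psi : word A -> R).
Local Open Scope ring_scope.

Hypothesis cbf : @cbifree R I A bool
  (fun (k : bool) (c : side) => [pred i | (if k then D1 i else D2 i) && side_eqb (sd i) c])
  (fun k => if k then uext t1 else uext t2)
  (fun k => if k then @delta_fun R I A else uext t2) phi psi.

Lemma restrict_D1 u : on_colors D1 u -> phi u = uext t1 u /\ psi u = delta_fun u.
Proof.
have [_ _ res _] := cbf; move=> uD1; apply: (res true); move: uD1.
by apply: sub_all => l /= ->; case: (sd (tag l)).
Qed.

Lemma restrict_D2 u : on_colors D2 u -> phi u = uext t2 u /\ psi u = uext t2 u.
Proof.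
have [_ _ res _] := cbf; move=> uD2; apply: (res false); move: uD2.
by apply: sub_all => l /= ->; case: (sd (tag l)).
Qed.

Local Notation eval := (bimon_eval sd D1 t1 t2).

Lemma phi_eval_D1 L s : {in s, forall j, colored D1 L j} -> phi (map L s) = eval L s.
Proof.
move=> sD1; rewrite (proj1 (restrict_D1 _)); last first.
  by rewrite /on_colors all_map; apply/allP.
rewrite /bimon_eval (all_filterP (introT allP sD1)) big1_seq ?mulr1 // => g /andP[_ gS].
case: g gS => [|y g] gS; first by rewrite filter_pred0.
have /andP[ys nD1] := mem_cut_by gS (mem_head y g).
by move: ys; rewrite (perm_mem (perm_chi_seq _ _)) => /sD1; rewrite (negbTE nD1).
Qed.

Section Step.
Variables (L : nat -> letter A) (n : nat).
Hypothesis colL : forall j, (j < n)%N -> D1 (tag (L j)) || D2 (tag (L j)).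

Local Notation base := (iota 0 n).
Local Notation c := (chi_seq (left_pos sd L) base).
Local Notation G := (cut_by (colored D1 L) c).
Local Notation cof := (centering_coefs (fun t => uext t2 (map L t)) base G).

Lemma mem_c j : (j \in c) = (j < n)%N.
Proof. by rewrite (perm_mem (perm_chi_seq _ _)) mem_iota. Qed.

Lemma flatten_G : flatten G = [seq j <- c | ~~ colored D1 L j].
Proof. exact: flatten_cut_by. Qed.

Lemma uniq_flatten_G : uniq (flatten G).
Proof. by rewrite flatten_G filter_uniq // (perm_uniq (perm_chi_seq _ _)) iota_uniq. Qed.

Lemma mem_G g j : g \in G -> j \in g -> (j < n)%N && ~~ colored D1 L j.
Proof. by move=> gG jg; have := mem_cut_by gG jg; rewrite mem_c. Qed.

Lemma cof_D1 j : colored D1 L j -> cof j = 0.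
Proof. by move=> jD1; rewrite centering_coefs_out // flatten_G mem_filter jD1. Qed.

Lemma expand_segment (f : word A -> R) g :
  (forall u, on_colors D2 u -> f u = uext t2 u) ->
  g \in G -> [seq j <- base | j \in g] != [::] ->
  expand (fun t => f (map L t)) cof [seq j <- base | j \in g] = 0.
Proof.
move=> fD2 gG gn.
rewrite -(@expand_centering_coefs _ (fun t => uext t2 (map L t)) base G g) //;
  rewrite ?iota_uniq ?uniq_flatten_G //.
apply: eq_expand => t ts; apply: fD2; rewrite /on_colors all_map; apply/allP => j jt /=.
have /andP[jg _] : (j \in g) && (j \in base) by rewrite -mem_filter (mem_subseq ts).
have /andP[jn nD1] := mem_G gG jg.
by have := colL jn; rewrite /colored in nD1; rewrite (negbTE nD1).
Qed.

Lemma mem_run V j : V \in runs (colored D1 L) c -> j \in V -> (j < n)%N.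
Proof.
move=> VR jV; rewrite -mem_c -[c](flatten_runs (colored D1 L)).
by apply/flattenP; exists V.
Qed.

Lemma segment_of_run V : V \in runs (colored D1 L) c -> ~~ colored D1 L (head 0%N V) ->
  V \in G /\ [seq j <- base | j \in V] != [::].
Proof.
move=> VR hV; have /andP[Vn _] := runs_constant VR.
have : V \in [seq V <- runs (colored D1 L) c | ~~ colored D1 L (head 0%N V)].
  by rewrite mem_filter hV VR.
rewrite runs_cut_by mem_filter => /andP[_ VG]; split=> //.
case: V Vn VG {VR hV} => // y V _ VG; apply/eqP => /(congr1 (fun s => y \in s)).
by rewrite mem_filter mem_head mem_iota add0n; have /andP[-> _] := mem_G VG (mem_head y V).
Qed.

Local Notation b := (shift_letter L cof).

Lemma psi_shift_run0 V : V \in runs (colored D1 L) c -> ev psi (bprod b n V) = 0.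
Proof.
move=> VR; rewrite /bprod ev_prod_shift.
case hV: (colored D1 L (head 0%N V)); last first.
  have [VG Vn] := segment_of_run VR (negbT hV).
  by apply: expand_segment => // u /restrict_D2[].
have /andP[Vn aV] := runs_constant VR.
have VD1 j : j \in V -> colored D1 L j by move=> jV; rewrite (eqP (allP aV j jV)).
rewrite expand_coef0 => [|j]; last by rewrite mem_filter => /andP[/VD1 /cof_D1].
rewrite (proj2 (restrict_D1 _)); last first.
  by rewrite /on_colors all_map; apply/allP => j; rewrite mem_filter => /andP[/VD1].
case: V Vn VR {hV aV VD1} => // y V _ VR.
have : y \in [seq i <- base | i \in y :: V].
  by rewrite mem_filter mem_head mem_iota (mem_run VR (mem_head y V)).
by case: [seq i <- _ | _].
Qed.

Lemma exists_D2_segment : ~~ all (colored D1 L) base ->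
  exists g, [/\ g \in G, g \in runs (colored D1 L) c & [seq j <- base | j \in g] != [::]].
Proof.
case/allPn => j jb nD1; have jn : (j < n)%N by move: jb; rewrite mem_iota.
have : j \in flatten G by rewrite flatten_G mem_filter nD1 mem_c.
case/flattenP => g gG jg; exists g; split=> //; last first.
  by apply/eqP => /(congr1 (fun s => j \in s)); rewrite mem_filter jg jb.
have : g \in [seq g <- G | g != [::]] by rewrite mem_filter gG; case: (g) jg.
by rewrite -runs_cut_by mem_filter => /andP[].
Qed.

Lemma felem_on_shift j : (j < n)%N ->
  felem_on [pred i | (if colored D1 L j then D1 i else D2 i) && side_eqb (sd i) (sd (tag (L j)))]
    (b j).
Proof.
move=> jn; rewrite /felem_on /on_colors /= andbT.
by have := colL jn; rewrite /colored; case: (D1 _) => /= [_|->]; case: (sd _).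
Qed.

Lemma phi_shift0 : ~~ all (colored D1 L) base -> ev phi (prodf (map b base)) = 0.
Proof.
move=> hasD2; have [g [gG gR gn]] := exists_D2_segment hasD2.
have npos : (0 < n)%N by rewrite lt0n; apply: contraNneq hasD2 => ->.
have [_ _ _ rule] := cbf.
have [_] := rule n (fun j => sd (tag (L j))) (colored D1 L) b npos felem_on_shift psi_shift_run0.
rewrite {1}/bprod; have -> : [seq i <- base | i \in base] = base by apply/all_filterP/allP.
move=> ->; rewrite (big_rem _ gR) /= /bprod ev_prod_shift expand_segment ?mul0r //.
by move=> u /restrict_D2[].
Qed.

Local Notation seg_eval := (fun t : seq nat => uext t1 [seq L j | j <- t & colored D1 L j] *
  \prod_(g <- G) uext t2 (map L [seq j <- [seq j <- t | ~~ colored D1 L j] | j \in g])).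

(* On subsequences of base keeping all letters of D1, the segments of the
   formula are the traces of the segments of base. *)
Lemma eval_covering t : subseq t base -> {in base, forall j, colored D1 L j -> j \in t} ->
  eval L t = seg_eval t.
Proof.
move=> tb tD1; rewrite /bimon_eval; congr (_ * _).
have tE : t = [seq j <- base | j \in t] by apply/subseq_uniqP; rewrite ?iota_uniq.
rewrite {1}tE chi_seq_filter cut_by_filter ?big_map => [|j]; last first.
  by rewrite mem_c => jn /tD1; apply; rewrite mem_iota.
apply: eq_big_seq => g gG; congr (uext t2 (map L _)); rewrite -filter_predI.
apply: eq_in_filter => j jt; rewrite mem_filter jt /=; case jg: (j \in g) => //=.
by have /andP[_ ->] := mem_G gG jg.
Qed.

Lemma expand_eval0 : ~~ all (colored D1 L) base -> expand (eval L) cof base = 0.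
Proof.
move=> hasD2; have [g [gG _ gn]] := exists_D2_segment hasD2.
rewrite (@eq_expand_covering _ (colored D1 L) _ seg_eval); first last.
- by move=> j _; apply: cof_D1.
- by move=> t tb tD1; apply: eval_covering.
rewrite (expand_split (colored D1 L) (fun t => uext t1 (map L t))
  (fun t => \prod_(g <- G) uext t2 (map L [seq j <- t | j \in g]))).
rewrite (@expand_prod _ G (fun _ t => uext t2 (map L t))) ?uniq_flatten_G //; last first.
  by move=> j; rewrite flatten_G !mem_filter mem_c mem_iota => /andP[-> /andP[_ ->]].
rewrite (big_rem _ gG) /=.
have -> : [seq j <- [seq j <- base | ~~ colored D1 L j] | j \in g] = [seq j <- base | j \in g].
  rewrite -filter_predI; apply: eq_filter => j /=.
  by case jg: (j \in g) => //; have /andP[_ ->] := mem_G gG jg.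
by rewrite (@expand_segment (uext t2)) ?mul0r ?mulr0.
Qed.

Lemma phi_eval_step : ~~ all (colored D1 L) base ->
  (forall t, subseq t base -> (size t < n)%N -> phi (map L t) = eval L t) ->
  phi (map L base) = eval L base.
Proof.
move=> hasD2 IH.
have := @expand_subr_top _ (fun t => phi (map L t)) (eval L) cof base.
rewrite size_iota -ev_prod_shift phi_shift0 // expand_eval0 // !sub0r.
by move=> /(_ IH) /oppr_inj.
Qed.

End Step.

Lemma phi_bimon_eval L s : uniq s -> {in s, forall j, D1 (tag (L j)) || D2 (tag (L j))} ->
  phi (map L s) = eval L s.
Proof.
have [m] := ubnP (size s); elim: m L s => // m IH L s sm us sD.
rewrite -(mkseq_nth 0 s) /mkseq -map_comp bimon_eval_map; last first.
  move=> i j; rewrite !mem_iota /= !add0n => i_ j_ /eqP.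
  by rewrite nth_uniq // => /eqP.
set L' := L \o nth 0 s.
have colL' j : (j < size s)%N -> D1 (tag (L' j)) || D2 (tag (L' j)).
  by move=> js; apply: sD; rewrite mem_nth.
have [allD1|hasD2] := boolP (all (colored D1 L') (iota 0 (size s))).
  by apply: phi_eval_D1; apply/allP.
apply: phi_eval_step => // t tb ts; apply: IH.
- by apply: leq_trans ts _; rewrite -ltnS.
- exact: subseq_uniq tb (iota_uniq 0 _).
- move=> j jt; apply: colL'.
  by have := mem_subseq tb jt; rewrite mem_iota.
Qed.

End BimonFormula.

Local Open Scope ring_scope.

Lemma bimon_rel_eval (R : fieldType) (I : Type) (A : I -> nualg R) (sd : I -> side)
    (D1 D2 : pred I) (t1 t2 t : word A -> R) (L : nat -> letter A) (s : seq nat) :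
  bimon_rel sd D1 D2 t1 t2 t -> uniq s ->
  {in s, forall j, D1 (tag (L j)) || D2 (tag (L j))} ->
  uext t (map L s) = bimon_eval sd D1 t1 t2 L s.
Proof.
case=> phi [psi [cbf tE]] us sD; rewrite -(phi_bimon_eval cbf us sD).
case: s us sD => [|j s] _ sD; first by have [[_ ->] _ _ _] := cbf.
by rewrite map_cons /= tE // /on_colors -map_cons all_map; apply/allP.
Qed.

Lemma bimon_evalA (R : fieldType) (I : Type) (A : I -> nualg R) (sd : I -> side)
    (D0 D1 : pred I) (f0 f1 f2 t01 t12 : word A -> R) (L : nat -> letter A) (s : seq nat) :
  let c := chi_seq (left_pos sd L) s in uniq s ->
  uext t01 [seq L j | j <- s & colored (predU D0 D1) L j] =
    bimon_eval sd D0 f0 f1 L [seq j <- s | colored (predU D0 D1) L j] ->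
  (forall g, g \in cut_by (colored D0 L) c ->
    uext t12 [seq L j | j <- s & j \in g] = bimon_eval sd D1 f1 f2 L [seq j <- s | j \in g]) ->
  bimon_eval sd (predU D0 D1) t01 f2 L s = bimon_eval sd D0 f0 t12 L s.
Proof.
move=> c us t01E t12E; rewrite /bimon_eval -/c t01E [in RHS](eq_big_seq _ t12E) /bimon_eval.
set q0 := colored D0 L; set q1 := colored D1 L; set q01 := colored (predU D0 D1) L.
have uc : uniq c by rewrite (perm_uniq (perm_chi_seq _ _)).
have nq0 g j : g \in cut_by q0 c -> j \in g -> q0 j = false.
  by move=> gS jg; have /andP[_ /negbTE] := mem_cut_by gS jg.
have q01E j : q01 j = q0 j || q1 j by [].
have -> : [seq j <- [seq j <- s | q01 j] | q0 j] = [seq j <- s | q0 j].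
  by rewrite -filter_predI; apply: eq_filter => j /=; rewrite q01E; case: (q0 j).
rewrite chi_seq_filter -/c cut_by_filter => [|j _]; last by rewrite q01E => ->.
have -> : cut_by q01 c = flatten (map (cut_by q1) (cut_by q0 c)) by rewrite cut_by_cut_by.
rewrite big_map big_flatten big_map -mulrA -big_split; congr (_ * _).
apply: eq_big_seq => g gS /=; congr (_ * _).
  congr (uext f1 (map L _)); rewrite -!filter_predI; apply: eq_filter => j /=.
  rewrite mem_filter; case jg: (j \in g); rewrite ?andbF //=.
  by rewrite q01E (nq0 g j gS jg) !andbT andbb.
rewrite chi_seq_filter -/c (filter_mem_cut_by uc gS).
apply: eq_big_seq => h hS; congr (uext f2 (map L _)); rewrite -filter_predI.
apply: eq_filter => j /=; case jh: (j \in h) => //=.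
by have /andP[-> _] := mem_cut_by hS jh.
Qed.

Lemma pairc_cover (i : 'I_3 * side) : [|| pairc 0 i, pairc 1 i | pairc 2 i].
Proof. by case: i => [[[|[|[|k]]] ?] ?]. Qed.

Unset Implicit Arguments.

Theorem theorem2p3 (C : numClosedFieldType)
  (A : 'I_3 * side -> nualg C)
  (phi1 phi2 phi3 : word A -> C)
  (h1 : lin_functional_on (pairc 0) phi1)
  (h2 : lin_functional_on (pairc 1) phi2)
  (h3 : lin_functional_on (pairc 2) phi3)
  (t12 t12_3 t23 t1_23 : word A -> C) :
  bimon_rel snd (pairc 0) (pairc 1) phi1 phi2 t12 ->
  bimon_rel snd (predU (pairc 0) (pairc 1)) (pairc 2) t12 phi3 t12_3 ->
  bimon_rel snd (pairc 1) (pairc 2) phi2 phi3 t23 ->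
  bimon_rel snd (pairc 0) (predU (pairc 1) (pairc 2)) phi1 t23 t1_23 ->
  forall w : word A, w <> [::] -> t12_3 w = t1_23 w.
Proof.
move=> H12 H12_3 H23 H1_23 w wn.
have [x0 _] : exists x : letter A, True by case: w wn => // x ? _; exists x.
have uextE t : uext t w = t w by case: (w) wn.
rewrite -(uextE t12_3) -(uextE t1_23) -(mkseq_nth x0 w) /mkseq.
set L := nth x0 w; set base := iota 0 (size w).
have ub : uniq base := iota_uniq 0 _.
have cov01_2 : {in base, forall j, predU (pairc 0) (pairc 1) (tag (L j)) || pairc 2 (tag (L j))}.
  by move=> j _; rewrite /= -orbA pairc_cover.
have cov0_12 : {in base, forall j, pairc 0 (tag (L j)) || predU (pairc 1) (pairc 2) (tag (L j))}.
  by move=> j _; apply: pairc_cover.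
rewrite (bimon_rel_eval H12_3 ub cov01_2) (bimon_rel_eval H1_23 ub cov0_12).
apply: bimon_evalA => //.
  by apply: (bimon_rel_eval H12); rewrite ?filter_uniq // => j; rewrite mem_filter => /andP[].
move=> g gS; apply: (bimon_rel_eval H23); rewrite ?filter_uniq // => j.
rewrite mem_filter => /andP[jg _]; have /andP[_ nq0] := mem_cut_by gS jg.
rewrite /colored in nq0.
by case/or3P: (pairc_cover (tag (L j))) nq0 => ->; rewrite ?orbT.
Qed.
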